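(* Let $\phi:[0,1]\to[0,1]$ be a nondecreasing continuous function such that $\phi(x)>x$ for all $x\in(0,1)$, and let $V_\phi$ be the operator on $L_2[0,1]$ given by $(V_\phi f)(x)=\int_0^{\phi(x)}f(t)\,dt$. Then $V_\phi$ has no negative real eigenvalues, i.e. $\sigma_p(V_\phi)\cap(-\infty,0)=\emptyset$.
   Context: $\sigma_p(V_\phi)$ denotes the point spectrum of $V_\phi$. *)

From HB Require Import structures.
From mathcomp Require Import all_boot all_order all_algebra.
From mathcomp Require Import all_classical all_reals all_analysis.
Set Implicit Arguments. Unset Strict Implicit. Unset Printing Implicit Defensive.
Import Order.TTheory GRing.Theory Num.Theory.
Import numFieldNormedType.Exports.
Local Open Scope classical_set_scope.
Local Open Scope ring_scope.

Definition L2fun (R : realType) (u : R -> R) : Prop :=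
  measurable_fun (`[0%R, 1%R] : set R) u /\
  (\int[@lebesgue_measure R]_(x in `[0%R, 1%R]) ((u x) ^+ 2)%:E < +oo)%E.

Definition Vphi (R : realType) (phi : R -> R) (u : R -> R) (x : R) : R :=
  Rintegral (@lebesgue_measure R) `[0%R, phi x] u.

(* A complex number a + i b is
   encoded as the pair (a, b); a complex function f = u + i v is encoded by
   its real part u and imaginary part v.  V_phi f = (a + i b) f a.e. on [0,1]
   means V_phi u = a u - b v and V_phi v = a v + b u a.e. on [0,1]. *)
Definition point_spectrum (R : realType) (phi : R -> R) : set (R * R) :=
  [set z | exists u v : R -> R,
     [/\ L2fun u, L2fun v,
      ~ {ae @lebesgue_measure R, forall x, 0 <= x <= 1 -> u x = 0 /\ v x = 0} &
      {ae @lebesgue_measure R, forall x, 0 <= x <= 1 ->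
          Vphi phi u x = z.1 * u x - z.2 * v x /\
          Vphi phi v x = z.1 * v x + z.2 * u x}]].

From HB Require Import structures.
From mathcomp Require Import all_boot all_order all_algebra.
From mathcomp Require Import all_classical all_reals all_analysis.
From mathcomp Require Import measurable_realfun.
From mathcomp Require Import ring lra.
Import Order.TTheory GRing.Theory Num.Theory.
Import numFieldNormedType.Exports.
Local Open Scope classical_set_scope.
Local Open Scope ring_scope.

(** [V_phi u = primitive u \o phi], so an eigenfunction for [lam < 0]
    satisfies [u = m * primitive u \o phi] a.e. with [m = 1/lam < 0].
    Suppose [primitive u 1 >= 0] and let
    [tail z = primitive u 1 - primitive u z].  On a block [[y, t]] of length
    at most [-1/(2m)] with [tail <= 0] on [[t, 1]], a bound [tail <= N] on
    [[y, 1]] gives [u <= -m N] on [[y, t]] because [phi s >= s], hence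
    [tail <= N/2] on [[y, 1]].  Iterating, [tail <= 0] on the block, and
    block by block on all of [[0, 1]].  Applying this to [c u] for
    [c = primitive u 1], [1] and [-1], and using [primitive u 0 = 0], forces
    [primitive u = 0] on [[0, 1]], hence [u = 0] a.e. *)

Section integral_bounds.
Context {d : measure_display} {T : measurableType d} {R : realType}.
Variable mu : {measure set T -> \bar R}.

Lemma Rintegral_le_ae_bound (D : set T) (f : T -> R) (M r : R) :
  measurable D -> mu D = r%:E -> mu.-integrable D (EFin \o f) -> 0 <= M ->
  {ae mu, forall x, D x -> f x <= M} ->
  \int[mu]_(x in D) f x <= M * r.
Proof.
move=> mD muD fi M0 fM.
rewrite -lee_fin /Rintegral fineK; last exact: integrable_fin_num.
rewrite EFinM -muD integralE.
apply: (@le_trans _ _ (\int[mu]_(x in D) ((EFin \o f)^\+ x))%E).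
  rewrite leeBlDr; last first.
    rewrite ge0_fin_numE; last exact: integral_ge0.
    exact: integral_funeneg_lt_pinfty.
  by rewrite leeDl // integral_ge0.
rewrite -integral_cst //; apply: ae_ge0_le_integral => //.
- exact/measurable_funepos/measurable_int/fi.
- apply: (filterS (F := almost_everywhere mu)) fM => x fxM Dx.
  by rewrite funeposE /= ge_max !lee_fin M0 andbT; exact: fxM.
Qed.

Lemma sqr_integrable_integrable (D : set T) (u : T -> R) :
  measurable D -> (mu D < +oo)%E -> measurable_fun D u ->
  (\int[mu]_(x in D) ((u x) ^+ 2)%:E < +oo)%E ->
  mu.-integrable D (EFin \o u).
Proof.
move=> mD Dfin mu_ u2fin.
have mu2 : measurable_fun D (fun x => u x ^+ 2) by exact: measurable_funX.
apply/integrableP; split; first exact/measurable_EFinP.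
apply: (@le_lt_trans _ _ (\int[mu]_(x in D) (1%:E + ((u x) ^+ 2)%:E)))%E.
  apply: ge0_le_integral => //.
  - exact/measurableT_comp/measurable_EFinP.
  - exact/measurable_EFinP/measurable_funD.
  - move=> x _ /=; rewrite -EFinD lee_fin -real_normK ?num_real //.
    have := normr_ge0 (u x); nra.
rewrite ge0_integralD //; last 2 first.
- by move=> x _; rewrite lee_fin sqr_ge0.
- exact/measurable_EFinP.
by rewrite integral_cst // mul1e lte_add_pinfty.
Qed.

End integral_bounds.

Lemma le0_of_le_div_exp2 {R : realType} (k A : R) :
  0 <= A -> (forall n : nat, k <= A / 2 ^+ n) -> k <= 0.
Proof.
move=> A0 kA; rewrite leNgt; apply/negP => k0.
have /archi_boundP := divr_ge0 A0 (ltW k0); set n := Num.Def.archi_bound _.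
have n_le_2n : (n%:R : R) <= 2 ^+ n by rewrite -natrX ler_nat ltnW // ltn_expl.
have := kA n; rewrite ler_pdivlMr ?exprn_gt0 // => kA'.
rewrite ltr_pdivrMr // => Ak.
by have := ler_wpM2l (ltW k0) n_le_2n; lra.
Qed.

Lemma L2fun_integrable {R : realType} (u : R -> R) :
  L2fun u -> lebesgue_measure.-integrable `[0%R, 1%R] (EFin \o u).
Proof.
have mu01 : (lebesgue_measure (`[0%R, 1%R]%classic : set R) < +oo)%E.
  by rewrite lebesgue_measure_itv /= lte01 ltry.
by case=> mu_ u2; apply: sqr_integrable_integrable.
Qed.

Lemma itv_oc_sub01 {R : realType} (a b : R) :
  0 <= a -> b <= 1 -> `]a, b]%classic `<=` `[0%R, 1%R]%classic.
Proof.
move=> a0 b1 x /=; rewrite !in_itv /= => /andP[ax xb].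
by rewrite (le_trans a0 (ltW ax)) (le_trans xb b1).
Qed.

Lemma itv_cc_sub01 {R : realType} (b : R) :
  b <= 1 -> `[0, b]%classic `<=` `[0%R, 1%R]%classic.
Proof.
by move=> b1 x /=; rewrite !in_itv /= => /andP[-> xb]; rewrite (le_trans xb b1).
Qed.

Definition primitive {R : realType} (u : R -> R) (y : R) : R :=
  \int[@lebesgue_measure R]_(t in `[0, y]) u t.

Lemma primitive0 {R : realType} (u : R -> R) : primitive u 0 = 0.
Proof. by rewrite /primitive set_itv1 Rintegral_set1. Qed.

Section negative_eigenvalue.
Context {R : realType} {phi : R -> R}.
Local Notation mu := (@lebesgue_measure R).
Local Notation I01 := (`[0%R, 1%R]%classic : set R).
Hypothesis phi_between : forall x : R, 0 <= x <= 1 -> x <= phi x <= 1.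

Lemma phi_in01 x : 0 <= x <= 1 -> 0 <= phi x <= 1.
Proof.
move=> /[dup] /andP[x0 _] /phi_between /andP[xphi ->].
by rewrite (le_trans x0 xphi).
Qed.

Section tail_estimates.
Variables (u : R -> R) (m : R).
Hypothesis u_int : mu.-integrable I01 (EFin \o u).
Hypothesis m_lt0 : m < 0.
Hypothesis u_eq : {ae mu, forall x, 0 <= x <= 1 -> u x = m * primitive u (phi x)}.
Hypothesis primitive1_ge0 : 0 <= primitive u 1.

Let tail z := primitive u 1 - primitive u z.
Let L1norm := \int[mu]_(x in I01) `|u x|.
Let delta := - (2 * m)^-1.

Lemma delta_gt0 : 0 < delta.
Proof. by rewrite oppr_gt0 invr_lt0 pmulr_rlt0. Qed.

Lemma tail_split (z t : R) : 0 <= z -> z <= t -> t <= 1 ->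
  tail z = tail t + \int[mu]_(s in `]z, t]) u s.
Proof.
move=> z0 zt t1.
have ut : mu.-integrable `[0, t] (EFin \o u).
  by apply: integrableS u_int => //; exact: itv_cc_sub01.
have := @Rintegral_itvB R u (BLeft 0) (BRight t) z ut.
by rewrite !bnd_simp => /(_ z0 zt) <-; rewrite /tail /primitive; ring.
Qed.

Lemma Rintegral_oc_le_L1norm (z t : R) : 0 <= z -> t <= 1 ->
  \int[mu]_(s in `]z, t]) u s <= L1norm.
Proof.
move=> z0 t1.
have uzt : mu.-integrable `]z, t] (EFin \o u).
  by apply: integrableS u_int => //; exact: itv_oc_sub01.
apply: le_trans (ler_norm _) _; apply: le_trans (le_normr_Rintegral _ uzt) _ => //.
apply: fine_le; [exact/integrable_fin_num/integrable_norm..|].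
apply: ge0_subset_integral => //; last exact: itv_oc_sub01.
apply/measurable_EFinP/measurableT_comp => //.
by apply/measurable_EFinP; exact: measurable_int u_int.
Qed.

Lemma tail_le0_le_L1norm (y t : R) : 0 <= y -> t <= 1 ->
  (forall z, t <= z <= 1 -> tail z <= 0) ->
  forall z, y <= z <= 1 -> tail z <= L1norm.
Proof.
have L0 : 0 <= L1norm by apply: Rintegral_ge0 => x _.
move=> y0 t1 tail_t z /andP[yz z1].
have [tz|zt] := leP t z; first by apply: le_trans (tail_t z _) L0; rewrite tz.
rewrite (tail_split _ _ (le_trans y0 yz) (ltW zt) t1).
have := tail_t t; rewrite lexx t1 => /(_ isT).
have := Rintegral_oc_le_L1norm _ _ (le_trans y0 yz) t1; lra.
Qed.

Lemma tail_halve (y t N : R) : 0 <= y -> y <= t -> t <= 1 -> t - y <= delta ->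
  0 <= N -> (forall z, t <= z <= 1 -> tail z <= 0) ->
  (forall z, y <= z <= 1 -> tail z <= N) ->
  forall z, y <= z <= 1 -> tail z <= N / 2.
Proof.
move=> y0 yt t1 tyd N0 tail_t tail_N z /andP[yz z1].
have [tz|zt] := leP t z.
  by apply: le_trans (tail_t z _) (divr_ge0 N0 _); rewrite ?tz.
have z0 := le_trans y0 yz.
rewrite (tail_split _ _ z0 (ltW zt) t1).
have u_le : {ae mu, forall s : R, `]z, t]%classic s -> u s <= - m * N}.
  apply: (filterS (F := almost_everywhere mu)) u_eq => s u_s.
  rewrite /= in_itv /= => /andP[zs st].
  have s01 : 0 <= s <= 1 by rewrite (le_trans z0 (ltW zs)) (le_trans st t1).
  have /andP[sphi phi1] := phi_between _ s01.
  have := tail_N (phi s); rewrite phi1 (le_trans yz (le_trans (ltW zs) sphi)).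
  move=> /(_ isT) tail_phi.
  have : 0 <= primitive u (phi s) + N.
    by move: tail_phi; rewrite /tail /=; have := primitive1_ge0; lra.
  rewrite (u_s s01) => FN; have := mulr_le0_ge0 (ltW m_lt0) FN; lra.
have mN0 : 0 <= - m * N by rewrite mulr_ge0 // oppr_ge0 ltW.
have uzt : mu.-integrable `]z, t] (EFin \o u).
  by apply: integrableS u_int => //; exact: itv_oc_sub01.
have mu_zt : mu `]z, t]%classic = (t - z)%:E.
  by rewrite lebesgue_measure_itv /= lte_fin zt -EFinD.
have := Rintegral_le_ae_bound mu _ _ _ _ (measurable_itv _) mu_zt uzt mN0 u_le.
have : - m * N * (t - z) <= - m * N * delta by rewrite ler_wpM2l //; lra.
have -> : - m * N * delta = N / 2 by rewrite /delta; field; rewrite ltr0_neq0.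
have := tail_t t; rewrite lexx t1 => /(_ isT); lra.
Qed.

Lemma tail_le0_block (n : nat) (y : R) :
  0 <= y <= 1 -> 1 - n%:R * delta <= y -> tail y <= 0.
Proof.
have d0 := delta_gt0.
elim: n y => [|n IH] y /andP[y0 y1] hy.
  have -> : y = 1 by apply/eqP; rewrite eq_le y1; rewrite mul0r subr0 in hy.
  by rewrite /tail subrr.
set t := 1 - n%:R * delta.
have [ty|yt] := leP t y; first by apply: IH => //; rewrite y0 y1.
have nd0 : 0 <= n%:R * delta by rewrite mulr_ge0 // ltW.
have tail_t z : t <= z <= 1 -> tail z <= 0.
  move=> /andP[tz z1]; apply: IH => //.
  by rewrite z1 (le_trans y0 (le_trans (ltW yt) tz)).
have t1 : t <= 1 by rewrite /t; lra.
have tyd : t - y <= delta by rewrite -natr1 in hy; rewrite /t; lra.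
have L0 : 0 <= L1norm by apply: Rintegral_ge0.
have tail_le k : forall z, y <= z <= 1 -> tail z <= L1norm / 2 ^+ k.
  elim: k => [|k IHk]; first by rewrite expr0 divr1; exact: tail_le0_le_L1norm t1 _.
  rewrite exprS invfM mulrA mulrAC.
  exact: tail_halve (ltW yt) t1 tyd (divr_ge0 L0 (exprn_ge0 _ _)) tail_t IHk.
apply: (le0_of_le_div_exp2 _ _ L0) => k.
by apply: tail_le; rewrite lexx y1.
Qed.

Lemma primitive1_le (x : R) : 0 <= x <= 1 -> primitive u 1 <= primitive u x.
Proof.
move=> /andP[x0 x1].
have d0 := delta_gt0.
have /archi_boundP : 0 <= delta^-1 by rewrite invr_ge0 ltW.
set n := Num.Def.archi_bound _; rewrite -[_^-1]div1r ltr_pdivrMr // => n_delta.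
have : tail x <= 0 by apply: (tail_le0_block n); [rewrite x0 x1 | lra].
rewrite /tail; lra.
Qed.

End tail_estimates.

Lemma primitiveZ (u : R -> R) (c y : R) : mu.-integrable I01 (EFin \o u) ->
  y <= 1 -> primitive (fun x => c * u x) y = c * primitive u y.
Proof.
move=> u_int y1; apply: RintegralZl => //.
by apply: integrableS u_int => //; exact: itv_cc_sub01.
Qed.

Lemma primitive1_le_scaled (u : R -> R) (m : R) :
  mu.-integrable I01 (EFin \o u) -> m < 0 ->
  {ae mu, forall x, 0 <= x <= 1 -> u x = m * primitive u (phi x)} ->
  forall c, 0 <= c * primitive u 1 ->
  forall x, 0 <= x <= 1 -> c * primitive u 1 <= c * primitive u x.
Proof.
move=> u_int m_lt0 u_eq c cF1 x /andP[x0 x1].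
have cu_int : mu.-integrable I01 (EFin \o (fun x => c * u x)).
  by apply: eq_integrable (integrableZl _ _ u_int).
rewrite -!(primitiveZ _ c) //.
apply: (primitive1_le _ _ cu_int m_lt0); last by rewrite x0 x1.
- apply: (filterS (F := almost_everywhere mu)) u_eq => s u_s s01.
  have /andP[_ phi1] := phi_between _ s01.
  by rewrite primitiveZ // (u_s s01) mulrCA.
- by rewrite primitiveZ.
Qed.

Lemma eigenfunction_ae0 (u : R -> R) (lam : R) :
  mu.-integrable I01 (EFin \o u) -> lam < 0 ->
  {ae mu, forall x, 0 <= x <= 1 -> Vphi phi u x = lam * u x} ->
  {ae mu, forall x, 0 <= x <= 1 -> u x = 0}.
Proof.
move=> u_int lam_lt0 u_eigen.
have u_eq : {ae mu, forall x, 0 <= x <= 1 -> u x = lam^-1 * primitive u (phi x)}.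
  apply: (filterS (F := almost_everywhere mu)) u_eigen => x Vu x01.
  by rewrite [primitive _ _]Vu // mulKf // ltr0_neq0.
have := primitive1_le_scaled _ _ u_int _ u_eq.
rewrite invr_lt0 => /(_ lam_lt0) scaled.
have primitive1_eq0 : primitive u 1 = 0.
  have := scaled (primitive u 1) (sqr_ge0 _) 0; rewrite primitive0 mulr0 lexx ler01.
  by move=> /(_ isT) sqr_le0; apply/eqP; rewrite -sqrf_eq0 eq_le sqr_ge0 andbT expr2.
have primitive_eq0 x : 0 <= x <= 1 -> primitive u x = 0.
  move=> x01; have := scaled 1 _ x x01; have := scaled (-1) _ x x01.
  by rewrite primitive1_eq0 !mulr0 lexx; lra.
apply: (filterS (F := almost_everywhere mu)) u_eq => x u_x x01.
by rewrite u_x // primitive_eq0 ?mulr0 // phi_in01.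
Qed.

End negative_eigenvalue.

Lemma id_le_phi_le1 {R : realType} {phi : R -> R} :
  (forall x : R, 0 <= x <= 1 -> 0 <= phi x <= 1) ->
  (forall x y : R, 0 <= x -> x <= y -> y <= 1 -> phi x <= phi y) ->
  (forall x : R, 0 < x < 1 -> x < phi x) ->
  forall x : R, 0 <= x <= 1 -> x <= phi x <= 1.
Proof.
move=> phi_range phi_mono phi_gt x /[dup] x01 /andP[x0 x1].
have /andP[phi0 ->] := phi_range x x01; rewrite andbT.
have [x_eq0|x_neq0] := eqVneq x 0; first by rewrite x_eq0 in phi0 *.
have [x_eq1|x_neq1] := eqVneq x 1; last first.
  by apply/ltW/phi_gt; rewrite !lt_neqAle eq_sym x_neq0 x_neq1 x0 x1.
rewrite x_eq1 leNgt; apply/negP => phi1_lt1.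
have := phi_range 1; rewrite ler01 lexx => /(_ isT) /andP[phi1_ge0 _].
pose w := (phi 1 + 1) / 2.
have w01 : 0 < w < 1 by apply/andP; split; rewrite /w; lra.
have := phi_gt w w01; have := phi_mono w 1.
case/andP: w01 => w0 w1; rewrite (ltW w0) (ltW w1) lexx => /(_ isT isT isT).
rewrite /w; lra.
Qed.

Theorem proposition4p1 (R : realType) (phi : R -> R)
  (phi_cont : {within `[0%R, 1%R], continuous phi})
  (phi_range : forall x : R, 0 <= x <= 1 -> 0 <= phi x <= 1)
  (phi_mono : forall x y : R, 0 <= x -> x <= y -> y <= 1 -> phi x <= phi y)
  (phi_gt : forall x : R, 0 < x < 1 -> x < phi x) :
  point_spectrum phi `&` [set z : R * R | z.2 = 0 /\ z.1 < 0] = set0.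
Proof.
have phi_between := id_le_phi_le1 phi_range phi_mono phi_gt.
rewrite -subset0 => -[lam b] [[u [v [Lu Lv uv_neq0 eigen]]]] /= [b0 lam_lt0].
have u0 : {ae lebesgue_measure, forall x, 0 <= x <= 1 -> u x = 0}.
  apply: (eigenfunction_ae0 phi_between _ _ (L2fun_integrable _ Lu) lam_lt0).
  apply: (filterS (F := almost_everywhere _)) eigen => x e x01.
  by have [-> _] := e x01; rewrite b0 mul0r subr0.
have v0 : {ae lebesgue_measure, forall x, 0 <= x <= 1 -> v x = 0}.
  apply: (eigenfunction_ae0 phi_between _ _ (L2fun_integrable _ Lv) lam_lt0).
  apply: (filterS (F := almost_everywhere _)) eigen => x e x01.
  by have [_ ->] := e x01; rewrite b0 mul0r addr0.
apply: uv_neq0; apply: (filterS2 (ae_filter_ringOfSetsType _)) u0 v0 => x ux vx x01.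
by rewrite ux // vx.
Qed.
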